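(* Suppose the adversary's distribution $\mathcal D_t$ of $s_t=(x_t,y_t)$ at round $t$ (given the history $s_{1:t-1}$) has $\sigma$-smooth $x$-marginal. Then for algorithm $\mathscr Q^{\mathrm{FTPL}}$ with parameter $n$, $$\chi^2\big(\mathbb E_{s_t\sim\mathcal D_t}[\mathcal Q_{t+1}],\mathcal Q_t\big)\le\frac{2}{\sigma n}.$$
   Context: $\mathcal X$ is a finite set with uniform base measure; a distribution $\mathcal D$ on $\mathcal X$ is $\sigma$-smooth if $\mathcal D(x)\le\frac{1}{\sigma|\mathcal X|}$ for all $x$. Algorithm $\mathscr Q^{\mathrm{FTPL}}$ for a class $\mathcal F\subseteq\{\mathcal X\to[0,1]\}$ with parameters $n,\alpha$: at each round $t$, draw $N^{(t)}\sim\mathrm{Poi}(n)$ and fresh i.i.d. hallucinated samples uniform on $\mathcal X\times\{0,1\}$; set $\tilde h_t=\mathrm{OPT}(\text{hallucinated samples}\cup\{s_\tau\}_{\tau<t})$, where $\mathrm{OPT}$ returns an empirical log-loss minimizer over $\mathcal F$ as a deterministic function of the data multiset; the learner's hypothesis is $h_t=\frac{\tilde h_t+\alpha}{1+2\alpha}$. $\mathcal Q_t$ is the distribution of $h_t$ given $s_{1:t-1}$, $\mathcal Q_{t+1}$ the distribution of $h_{t+1}$ given $s_{1:t}$, and $\mathbb E_{s_t\sim\mathcal D_t}[\mathcal Q_{t+1}]$ the mixture over $s_t$. $\chi^2(P,Q)=\mathbb E_Q[(dP/dQ-1)^2]$. *)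

From HB Require Import structures.
From mathcomp Require Import all_boot all_order all_algebra.
From mathcomp Require Import all_classical all_reals all_analysis.
Set Implicit Arguments. Unset Strict Implicit. Unset Printing Implicit Defensive.
Import Order.TTheory GRing.Theory Num.Theory.
Local Open Scope classical_set_scope.
Local Open Scope ring_scope.

Section FTPL.
Context {R : realType} {X : finType}.

(* labelled examples s = (x, y) with y in {0,1} (false = 0, true = 1) *)
Definition ex := (X * bool)%type.

Definition counts (s : seq ex) : {ffun ex -> nat} := [ffun z => count_mem z s].

(* pmf of the hallucinated sample sequence: N ~ Poi(n), then N i.i.d. samples
   uniform on X x {0,1}; a sequence s has probability
   Poi(n)(size s) * (1 / (2|X|))^(size s). *)
Definition halluc_pmf (n : R) (s : seq ex) : R :=
  poisson_pmf n (size s) * ((2 * #|X|)%:R ^-1) ^+ size s.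

Definition logloss (h : X -> R) (z : ex) : \bar R :=
  let: (x, y) := z in
  if y then (if h x <= 0 then +oo%E else (- ln (h x))%:E)
  else (if 1 - h x <= 0 then +oo%E else (- ln (1 - h x))%:E).

Definition emp_logloss (h : X -> R) (c : {ffun ex -> nat}) : \bar R :=
  (\sum_(z : ex) (c z)%:R%:E * logloss h z)%E.

Definition is_ERM (F : set (X -> R)) (OPT : {ffun ex -> nat} -> (X -> R)) :=
  forall c, F (OPT c) /\ forall f, F f -> (emp_logloss (OPT c) c <= emp_logloss f c)%E.

(* learner hypothesis computed from the whole data sequence
   (hallucinated samples together with the history) *)
Definition ftpl_hyp (OPT : {ffun ex -> nat} -> (X -> R)) (alpha : R)
  (d : seq ex) : X -> R :=
  fun x => (OPT (counts d) x + alpha) / (1 + 2 * alpha).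

(* distribution of the learner's hypothesis h_t given history hist = s_{1:t-1} *)
Definition Qdist (OPT : {ffun ex -> nat} -> (X -> R)) (n alpha : R)
  (hist : seq ex) (h : X -> R) : \bar R :=
  \esum_(s in [set s : seq ex | ftpl_hyp OPT alpha (s ++ hist) = h])
     (halluc_pmf n s)%:E.

(* chi-square divergence chi^2(P, Q) = E_Q[(dP/dQ - 1)^2] between two
   countably supported distributions given by their pmfs; +oo if P is not
   absolutely continuous w.r.t. Q. *)
Definition chi2 {U : choiceType} (P Q : U -> \bar R) : \bar R :=
  if `[< exists u, Q u = 0%E /\ P u != 0%E >] then +oo%E
  else \esum_(u in [set u | Q u != 0%E])
         (((fine (P u) - fine (Q u)) ^+ 2) / fine (Q u))%:E.

(* sigma-smoothness of the x-marginal of D (uniform base measure on X) *)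
Definition smooth_xmarg (sigma : R) (D : ex -> R) :=
  forall x : X, D (x, false) + D (x, true) <= (sigma * #|X|%:R)^-1.

Definition is_pmf (D : ex -> R) := (forall z, 0 <= D z) /\ \sum_(z : ex) D z = 1.

End FTPL.

From HB Require Import structures.
From mathcomp Require Import all_boot all_order all_algebra.
From mathcomp Require Import all_classical all_reals all_analysis.
From mathcomp Require Import finmap ring lra zify.
Set Implicit Arguments. Unset Strict Implicit. Unset Printing Implicit Defensive.
Import Order.TTheory GRing.Theory Num.Theory.
Local Open Scope classical_set_scope.
Local Open Scope ring_scope.

(* Let q be the law of the hallucinated sequence s (Poisson(n) length, entries
   i.i.d. uniform on X * bool, each of probability u = 1/(2|X|)) and let
   hyp s be the hypothesis computed from s ++ hist, so Q_t is the push-forward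
   of q by hyp.  Appending z ~ D to the history has the same effect as adding
   z to s, and the Poisson "size-biasing" identity
     \sum_z D z * E_q[phi (z :: s)] = E_q[r s * phi s],
     r s = (n u)^-1 * \sum_(x <- s) D x,
   (valid for symmetric phi) shows that E_D[Q_(t+1)] is the push-forward of
   the measure q * r.  The data processing inequality for chi^2 bounds the
   divergence of the push-forwards by E_q[(r - 1)^2] = (n u)^-1 \sum_z D z ^ 2,
   and sigma-smoothness gives \sum_z D z ^ 2 <= max_z D z <= 1/(sigma |X|).
   The argument only uses that OPT is a deterministic function of the data
   multiset. *)

Section NonnegativeSums.
Context {R : realType}.
Local Open Scope ereal_scope.

Lemma esumZl (T : choiceType) (I : set T) (c : R) (a : T -> \bar R) :
  (0 <= c)%R -> (forall t, 0 <= a t) ->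
  \esum_(t in I) (c%:E * a t) = c%:E * \esum_(t in I) a t.
Proof.
move=> c0 a0; rewrite /esum -ereal_supZl //; last first.
  by apply/set0P; exists 0; exists set0; [exact: fsets_set0 | rewrite fsbig_set0].
rewrite image_comp; congr ereal_sup; apply: eq_imagel => A _ /=.
by rewrite ge0_mule_fsumr.
Qed.

Lemma esumZr_fin (T : choiceType) (I : set T) (c : R) (g : T -> R) :
  (0 <= c)%R -> (forall t, 0 <= g t)%R ->
  \esum_(t in I) (g t * c)%:E = c%:E * \esum_(t in I) (g t)%:E.
Proof.
move=> c0 g0; have gE0 t : 0 <= (g t)%:E by rewrite lee_fin.
by rewrite -esumZl //; apply: eq_esum => t _; rewrite EFinM muleC.
Qed.

Lemma esum_preimage (V U : choiceType) (f : V -> U) (g : V -> R) (h : U) :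
  \esum_(t in [set t | f t = h]) (g t)%:E
  = \esum_(t in [set: V]) (g t * (f t == h)%:R)%:E.
Proof.
rewrite esum_mkcond; apply: eq_esum => t _.
case: eqVneq => [fth | fth]; first by rewrite mem_set // mulr1.
by rewrite memNset ?mulr0 //; apply/eqP.
Qed.

Lemma sum_indicator (U : eqType) (x : U) (s : seq U) :
  (\sum_(h <- s) ((x == h)%:R : R) = (count_mem x s)%:R)%R.
Proof.
by elim: s => [|h s IH]; rewrite ?big_nil // big_cons IH /= natrD eq_sym.
Qed.

Lemma esum_setT_fin (T : finType) (f : T -> \bar R) :
  (forall t, 0 <= f t) -> \esum_(t in [set: T]) f t = \sum_(t : T) f t.
Proof.
have finT : finite_set [set: T] by exact: finite_finset.
move=> f0; rewrite esum_fset // fsbig_finite //=.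
apply: perm_big; apply: uniq_perm; [exact: fset_uniq | exact: index_enum_uniq |].
by move=> t; rewrite in_fset_set // in_setT mem_index_enum.
Qed.

Lemma esum_seq_size (T : finType) (f : seq T -> \bar R) :
  (forall s, 0 <= f s) ->
  \esum_(s in [set: seq T]) f s = \sum_(k <oo) \sum_(t : k.-tuple T) f t.
Proof.
move=> f0.
have -> : [set: seq T] = \bigcup_k [set s | size s = k].
  by apply/seteqP; split => s //= _; exists (size s).
rewrite nneseries_sum_bigcup //; last by move=> i j _ _ [s [/= -> ->]].
apply: eq_eseriesr => k _.
have -> : [set s : seq T | size s = k] = (fun t : k.-tuple T => val t) @` setT.
  apply/seteqP; split => s /=; first by move=> sk; exists (Tuple (introT eqP sk)).
  by move=> [t _ <-]; rewrite size_tuple.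
by rewrite esum_image ?esum_setT_fin //; move=> a b _ _; apply: val_inj.
Qed.

Lemma esum_fibers_le (V U : choiceType) (f : V -> U) (g : V -> R) (I : set U) :
  (forall t, 0 <= g t)%R ->
  \esum_(h in I) \esum_(t in [set: V]) (g t * (f t == h)%:R)%:E
  <= \esum_(t in [set: V]) (g t)%:E.
Proof.
move=> g0; apply: ge_ereal_sup => _ [H [finH HI] <-].
rewrite fsbig_finite //= -esum_sum; last by move=> t h _ _; rewrite lee_fin mulr_ge0.
apply: le_esum => t _; rewrite sumEFin lee_fin -mulr_sumr sum_indicator.
rewrite count_uniq_mem; last exact: fset_uniq.
by case: (_ \in _); rewrite ?mulr1 ?mulr0.
Qed.

End NonnegativeSums.

(* The (unnormalised) law of f t when t carries the weights w. *)
Definition pushforward {R : realType} {V U : choiceType} (f : V -> U)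
  (w : V -> R) (h : U) : \bar R :=
  \esum_(t in [set: V]) (w t * (f t == h)%:R)%:E.

Section ChiSquareDataProcessing.
Context {R : realType} {V U : choiceType}.
Variables (f : V -> U) (r : V -> R).
Hypothesis r_ge0 : forall t, 0 <= r t.
Local Open Scope ereal_scope.

(* Weighted Cauchy-Schwarz: if w has mass Q > 0 and w * r has mass P then
   (P - Q)^2 / Q <= \sum_t w t (r t - 1)^2.  It follows by summing the
   pointwise inequality w (r - P/Q)^2 >= 0, written so that no finiteness of
   the right-hand side is needed. *)
Lemma weighted_cauchy_schwarz (w : V -> R) (Q P : R) : (forall t, 0 <= w t)%R ->
  \esum_(t in [set: V]) (w t)%:E = Q%:E ->
  \esum_(t in [set: V]) (w t * r t)%:E = P%:E -> (0 < Q)%R ->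
  ((P - Q) ^+ 2 / Q)%:E <= \esum_(t in [set: V]) (w t * (r t - 1) ^+ 2)%:E.
Proof.
move=> w0 wQ wP Q0.
have P0 : (0 <= P)%R.
  by rewrite -lee_fin -wP; apply: esum_ge0 => t _; rewrite lee_fin mulr_ge0.
set d := (P / Q)%R; have d0 : (0 <= d)%R by rewrite divr_ge0 // ltW.
have d2 : (0 <= 2 * d)%R by rewrite mulr_ge0.
have dd : (0 <= d ^+ 2)%R by rewrite sqr_ge0.
have wr0 t : (0 <= w t * r t)%R by rewrite mulr_ge0.
have wr2 t : (0 <= w t * r t * 2)%R by rewrite mulr_ge0.
have wr2d t : (0 <= w t * r t * (2 * d))%R by rewrite mulr_ge0 // mulr_ge0.
have wd2 t : (0 <= w t * d ^+ 2)%R by rewrite mulr_ge0 ?sqr_ge0.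
have wdev t : (0 <= w t * (r t - 1) ^+ 2)%R by rewrite mulr_ge0 ?sqr_ge0.
have pointwise : \esum_(t in [set: V]) ((w t * r t * (2 * d))%:E + (w t)%:E) <=
    \esum_(t in [set: V]) ((w t * (r t - 1) ^+ 2)%:E +
      ((w t * r t * 2)%:E + (w t * d ^+ 2)%:E)).
  apply: le_esum => t _; rewrite -!EFinD lee_fin.
  have := sqr_ge0 (r t - d); have := w0 t; nra.
rewrite !esumD ?esumZr_fin ?wP ?wQ // in pointwise;
  try by move=> t _; rewrite -?EFinD lee_fin ?addr_ge0.
move: pointwise; set S := esum _ _.
have : 0 <= S by apply: esum_ge0 => t _; rewrite lee_fin mulr_ge0 ?sqr_ge0.
case: S => [x| |] // _; last by move=> _; rewrite leey.
rewrite -!EFinM -!EFinD !lee_fin => ineq.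
have -> : ((P - Q) ^+ 2 / Q = 2 * d * P + Q - (2 * P + d ^+ 2 * Q))%R.
  by rewrite /d; field; rewrite gt_eqF.
lra.
Qed.

Lemma pushforward_le_mass (w : V -> R) h : (forall t, 0 <= w t)%R ->
  pushforward f w h <= \esum_(t in [set: V]) (w t)%:E.
Proof.
move=> w0; apply: le_esum => t _; rewrite lee_fin ler_piMr //.
by case: (_ == _); rewrite ?ler01.
Qed.

(* Reweighting preserves the null values of a push-forward: this is the
   absolute continuity needed for chi^2 to be finite. *)
Lemma pushforward_abs_cont (w c : V -> R) h :
  (forall t, 0 <= w t)%R -> (forall t, 0 <= c t)%R ->
  pushforward f w h = 0 -> pushforward f (fun t => w t * c t)%R h = 0.
Proof.
move=> w0 c0 wh0; apply: esum1 => t _.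
have : (w t * (f t == h)%:R)%:E <= pushforward f w h.
  apply: esum_ge; exists [set t]; first by split; [exact: finite_set1|].
  by rewrite fsbig_set1.
rewrite wh0 lee_fin => le0.
have wt0 : (w t * (f t == h)%:R = 0)%R.
  by apply/eqP; rewrite eq_le le0 mulr_ge0 //; case: (_ == _).
by rewrite mulrAC wt0 mul0r.
Qed.

Variable q : V -> R.
Hypotheses (q_ge0 : forall t, (0 <= q t)%R) (q_mass : \esum_(t in [set: V]) (q t)%:E = 1)
  (qr_mass : \esum_(t in [set: V]) (q t * r t)%:E = 1).

(* Data processing inequality: pushing the probability measures q * r and q
   forward by f does not increase chi^2(q * r, q) = E_q[(r - 1)^2].  On each
   fibre with positive Q-mass this is the weighted Cauchy-Schwarz inequality;
   the fibres are then summed. *)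
Lemma chi2_pushforward_le :
  chi2 (pushforward f (fun t => q t * r t)%R) (pushforward f q)
  <= \esum_(t in [set: V]) (q t * (r t - 1) ^+ 2)%:E.
Proof.
have qr0 t : (0 <= q t * r t)%R by rewrite mulr_ge0.
rewrite /chi2; case: asboolP => [[h [Q0 /negP []]] | _].
  by apply/eqP; apply: pushforward_abs_cont.
have fin (w : V -> R) h : (forall t, 0 <= w t)%R -> \esum_(t in [set: V]) (w t)%:E = 1 ->
    pushforward f w h \is a fin_num.
  move=> w0 w1; rewrite ge0_fin_numE ?esum_ge0 // => [|t _]; last first.
    by rewrite lee_fin mulr_ge0 //; case: (_ == _).
  by rewrite (le_lt_trans (pushforward_le_mass h w0)) // w1 ltry.
apply: le_trans (esum_fibers_le f _ (fun t => mulr_ge0 (q_ge0 t) (sqr_ge0 (r t - 1)))).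
apply: le_esum => h /= Qh0.
have Qfin := fin q h q_ge0 q_mass.
have Pfin := fin _ h qr0 qr_mass.
have ind0 t : (0 <= q t * (f t == h)%:R)%R by rewrite mulr_ge0 //; case: (_ == _).
under eq_esum do rewrite mulrAC.
apply: weighted_cauchy_schwarz => //.
- by rewrite fineK.
- by rewrite fineK //; apply: eq_esum => t _; rewrite mulrAC.
- rewrite -lte_fin fineK // lt_neqAle eq_sym Qh0 /=.
  by apply: esum_ge0 => t _; rewrite lee_fin.
Qed.
End ChiSquareDataProcessing.

Section TupleSymmetrisation.
Context {R : realType} {T : finType}.

Lemma nth_rot0 (s : seq T) i x0 : (i < size s)%N -> nth x0 (rot i s) 0 = nth x0 s i.
Proof. by move=> lti; rewrite /rot nth_cat size_drop subn_gt0 lti nth_drop addn0. Qed.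

(* Every position of the tuple can be
   rotated to the head. *)
Lemma sum_tuples_size_bias (k : nat) (D : T -> R) (phi : seq T -> R) :
  (forall a b, perm_eq a b -> phi a = phi b) ->
  \sum_(t : k.+1.-tuple T) (\sum_(x <- t) D x) * phi t
  = k.+1%:R * \sum_(z : T) D z * \sum_(s : k.-tuple T) phi (z :: s).
Proof.
move=> phi_perm.
have any_entry (i : 'I_k.+1) : \sum_(t : k.+1.-tuple T) D (tnth t i) * phi t
    = \sum_(t : k.+1.-tuple T) D (thead t) * phi t.
  have rot_inj : injective (fun t : k.+1.-tuple T => rot_tuple i t).
    by move=> a b /(congr1 val) /= /rot_inj /val_inj.
  rewrite [RHS](reindex_inj rot_inj) /=; apply: eq_bigr => t _.
  congr (D _ * _); last by apply: phi_perm; rewrite perm_sym perm_rot.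
  by rewrite /thead !(tnth_nth (thead t)) /= nth_rot0 // size_tuple.
have split_head : \sum_(t : k.+1.-tuple T) D (thead t) * phi t
    = \sum_(z : T) D z * \sum_(s : k.-tuple T) phi (z :: s).
  rewrite (reindex (fun p : T * k.-tuple T => [tuple of p.1 :: p.2])) /=; last first.
    exists (fun t : k.+1.-tuple T => (thead t, [tuple of behead t])).
      by move=> [z s] _ /=; rewrite theadE; congr pair; apply: val_inj.
    by move=> t _; rewrite [RHS]tuple_eta.
  rewrite -(pair_big xpredT xpredT (fun z (s : k.-tuple T) =>
    D (thead [tuple of z :: s]) * phi (z :: s))) /=.
  by apply: eq_bigr => z _; rewrite mulr_sumr; apply: eq_bigr => s _; rewrite theadE.
under eq_bigr => t _ do rewrite big_tuple mulr_suml.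
rewrite exchange_big /=; under eq_bigr => i _ do rewrite any_entry.
by rewrite sumr_const card_ord split_head mulr_natl.
Qed.
End TupleSymmetrisation.

Lemma poisson_pmfS {R : realType} (n : R) (k : nat) : 0 < n ->
  poisson_pmf n k.+1 = poisson_pmf n k * n / k.+1%:R.
Proof.
move=> n_gt0; rewrite /poisson_pmf n_gt0 factS natrM exprS.
have kfact_neq0 : (k`!)%:R != 0 :> R by rewrite pnatr_eq0 -lt0n fact_gt0.
by field; rewrite kfact_neq0 andbT addrC natr1.
Qed.

Section HallucinatedSample.
Context {R : realType} {X : finType}.
Variables (n : R) (D : X * bool -> R).
Hypotheses (n_gt0 : 0 < n) (X_gt0 : (0 < #|X|)%N) (D_ge0 : forall z, 0 <= D z).
Local Notation T := (X * bool)%type.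

Definition unif_weight : R := ((2 * #|X|)%:R)^-1.

(* Density of the law of the data after one adversarial example with respect
   to the law q of the hallucinated sequence (see size_bias). *)
Definition likelihood_ratio (s : seq T) : R :=
  (n * unif_weight)^-1 * \sum_(x <- s) D x.
Local Notation q := (@halluc_pmf R X n).
Local Notation r := likelihood_ratio.

Lemma unif_weight_gt0 : 0 < unif_weight.
Proof. by rewrite /unif_weight invr_gt0 ltr0n muln_gt0 X_gt0. Qed.

Lemma halluc_pmf_tuple k (t : k.-tuple T) : q t = poisson_pmf n k * unif_weight ^+ k.
Proof. by rewrite /halluc_pmf size_tuple. Qed.

Lemma halluc_pmf_ge0 s : 0 <= q s.
Proof. by rewrite mulr_ge0 ?poisson_pmf_ge0 // exprn_ge0 // invr_ge0. Qed.

Lemma likelihood_ratio_ge0 s : 0 <= r s.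
Proof.
by rewrite mulr_ge0 ?invr_ge0 ?mulr_ge0 ?sumr_ge0 // ltW // unif_weight_gt0.
Qed.

Lemma likelihood_ratio_perm a b : perm_eq a b -> r a = r b.
Proof. by move=> ab; rewrite /likelihood_ratio (perm_big _ ab). Qed.

Lemma likelihood_ratio_cons z s : r (z :: s) = r s + (n * unif_weight)^-1 * D z.
Proof. by rewrite /likelihood_ratio big_cons mulrDr addrC. Qed.

(* Size-biasing for sequences of a fixed length k + 1, using the Poisson
   recursion: prepending z ~ D to a length-k sequence is reweighting by r. *)
Lemma size_bias_tuples (phi : seq T -> R) k :
  (forall a b, perm_eq a b -> phi a = phi b) ->
  \sum_(z : T) D z * \sum_(s : k.-tuple T) q s * phi (z :: s)
  = \sum_(t : k.+1.-tuple T) q t * r t * phi t.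
Proof.
move=> phi_perm.
have u_neq0 : unif_weight != 0 by rewrite gt_eqF // unif_weight_gt0.
have kS_neq0 : k.+1%:R != 0 :> R by rewrite pnatr_eq0.
transitivity (poisson_pmf n k * unif_weight ^+ k *
    \sum_(z : T) D z * \sum_(s : k.-tuple T) phi (z :: s)).
  rewrite mulr_sumr; apply: eq_bigr => z _; rewrite mulrCA; congr (_ * _).
  by rewrite mulr_sumr; apply: eq_bigr => s _; rewrite halluc_pmf_tuple.
transitivity (poisson_pmf n k.+1 * unif_weight ^+ k.+1 * (n * unif_weight)^-1 *
    \sum_(t : k.+1.-tuple T) (\sum_(x <- t) D x) * phi t); last first.
  by rewrite mulr_sumr; apply: eq_bigr => t _; rewrite halluc_pmf_tuple !mulrA.
rewrite sum_tuples_size_bias // poisson_pmfS // exprS.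
by field; rewrite u_neq0 gt_eqF // addrC natr1 kS_neq0.
Qed.

Lemma size_bias (phi : seq T -> R) : (forall s, 0 <= phi s) ->
  (forall a b, perm_eq a b -> phi a = phi b) ->
  (\sum_(z : T) (D z)%:E * (\esum_(s in [set: seq T]) (q s * phi (z :: s))%:E)
   = \esum_(t in [set: seq T]) (q t * r t * phi t)%:E)%E.
Proof.
move=> phi0 phi_perm.
have qphi0 z s : (0 <= (q s * phi (z :: s))%:E)%E.
  by rewrite lee_fin (mulr_ge0 (halluc_pmf_ge0 _)).
have qrphi0 s : (0 <= (q s * r s * phi s)%:E)%E.
  by rewrite lee_fin (mulr_ge0 (mulr_ge0 (halluc_pmf_ge0 _) (likelihood_ratio_ge0 _))).
have tuples0 z k : (0 <= \sum_(t : k.-tuple T) (q t * phi (z :: t))%:E)%E.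
  by apply: sume_ge0 => t _; exact: qphi0.
under eq_bigr => z _ do rewrite esum_seq_size // -nneseriesZl //.
rewrite -nneseries_sum; last by move=> z k _; rewrite mule_ge0 ?lee_fin.
rewrite esum_seq_size // [RHS](nneseries_split 0 1); last first.
  by move=> k _; apply: sume_ge0 => t _; exact: qrphi0.
rewrite big_nat1 big1 ?add0e => [|t _]; last first.
  by rewrite tuple0 /likelihood_ratio big_nil !mulr0 mul0r.
rewrite -(@nneseries_addn R (fun k => \sum_(t : k.-tuple T) (q t * r t * phi t)%:E)%E 1);
  last by move=> k; apply: sume_ge0 => t _; exact: qrphi0.
apply: eq_eseriesr => k _; rewrite sumEFin addn1 -size_bias_tuples //.
under eq_bigr => z _ do rewrite sumEFin -EFinM.
by rewrite sumEFin.
Qed.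

Lemma halluc_mass : (\esum_(t in [set: seq T]) (q t)%:E = 1)%E.
Proof.
rewrite esum_seq_size; last by move=> s; rewrite lee_fin halluc_pmf_ge0.
have tuple_mass k : \sum_(t : k.-tuple T) q t = poisson_pmf n k.
  under eq_bigr => t _ do rewrite halluc_pmf_tuple.
  rewrite sumr_const card_tuple card_prod card_bool -mulr_natr -mulrA natrX.
  rewrite -exprMn /unif_weight mulnC mulVf ?expr1n ?mulr1 //.
  by rewrite pnatr_eq0 muln_eq0 negb_or /= -lt0n X_gt0.
under eq_eseriesr => k _ do rewrite sumEFin tuple_mass.
rewrite nneseries_esumT; last by move=> k; rewrite lee_fin poisson_pmf_ge0.
have poisson1 : (poisson_prob n 0%N [set: nat] = 1)%E.
  exact: (@probability_setT _ _ _ (poisson_prob n 0%N)).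
by move: poisson1; rewrite /poisson_prob n_gt0.
Qed.

Hypothesis D_mass : \sum_(z : T) D z = 1.

(* q * r is a probability distribution (size_bias with phi = 1). *)
Lemma likelihood_ratio_mass : (\esum_(t in [set: seq T]) (q t * r t)%:E = 1)%E.
Proof.
have := size_bias (fun=> ler01) (fun _ _ _ => erefl).
under [in RHS]eq_esum => t _ do rewrite mulr1.
move=> <-; under eq_bigr => z _.
  by under eq_esum => s _ do rewrite mulr1; rewrite halluc_mass mule1; over.
by rewrite sumEFin D_mass.
Qed.

(* E_q[r^2] = 1 + (n u)^-1 \sum_z D z ^ 2 (size_bias with phi = r). *)
Lemma likelihood_ratio_second_moment :
  (\esum_(t in [set: seq T]) (q t * r t ^+ 2)%:E
   = (1 + (n * unif_weight)^-1 * \sum_(z : T) D z ^+ 2)%:E)%E.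
Proof.
have := size_bias likelihood_ratio_ge0 likelihood_ratio_perm.
under [in RHS]eq_esum => t _ do rewrite -mulrA -expr2.
move=> <-.
have c0 : 0 <= (n * unif_weight)^-1 by rewrite invr_ge0 mulr_ge0 // ltW // unif_weight_gt0.
under eq_bigr => z _.
  under eq_esum => s _ do rewrite likelihood_ratio_cons mulrDr EFinD.
  rewrite esumD; last 2 first.
  - by move=> s _; rewrite lee_fin mulr_ge0 ?halluc_pmf_ge0 ?likelihood_ratio_ge0.
  - by move=> s _; rewrite lee_fin (mulr_ge0 (halluc_pmf_ge0 _)) ?mulr_ge0.
  rewrite likelihood_ratio_mass esumZr_fin ?mulr_ge0 //; last exact: halluc_pmf_ge0.
  rewrite halluc_mass mule1 -EFinD -EFinM.
  over.
rewrite sumEFin; congr EFin.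
rewrite mulr_sumr -[in RHS]D_mass -big_split /=; apply: eq_bigr => z _.
by rewrite expr2; ring.
Qed.

Lemma likelihood_ratio_variance :
  (\esum_(t in [set: seq T]) (q t * (r t - 1) ^+ 2)%:E
   = ((n * unif_weight)^-1 * \sum_(z : T) D z ^+ 2)%:E)%E.
Proof.
have q0 t : (0 <= (q t)%:E)%E by rewrite lee_fin halluc_pmf_ge0.
have qr0 t : (0 <= (q t * r t)%:E)%E.
  by rewrite lee_fin mulr_ge0 ?halluc_pmf_ge0 ?likelihood_ratio_ge0.
have qr20 t : (0 <= (q t * r t ^+ 2)%:E)%E.
  by rewrite lee_fin mulr_ge0 ?halluc_pmf_ge0 ?sqr_ge0.
have qdev0 t : (0 <= (q t * (r t - 1) ^+ 2)%:E)%E.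
  by rewrite lee_fin mulr_ge0 ?halluc_pmf_ge0 ?sqr_ge0.
have expand : (\esum_(t in [set: seq T])
      ((q t * (r t - 1) ^+ 2)%:E + ((q t * r t)%:E + (q t * r t)%:E))
    = \esum_(t in [set: seq T]) ((q t * r t ^+ 2)%:E + (q t)%:E))%E.
  by apply: eq_esum => t _; rewrite -!EFinD; congr EFin; ring.
rewrite !esumD // ?likelihood_ratio_mass ?likelihood_ratio_second_moment
  ?halluc_mass in expand; last by move=> t _; rewrite adde_ge0.
move: expand; set S := esum _ _.
have : (0 <= S)%E by apply: esum_ge0 => t _.
by case: S => [x| |] // _; rewrite -!EFinD => -[dev]; congr EFin; lra.
Qed.
End HallucinatedSample.

(* Under sigma-smoothness every example has probability at most
   1/(sigma |X|), hence so does the collision probability \sum_z D z ^ 2. *)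
Lemma smooth_collision_le {R : realType} {X : finType} (sigma : R)
  (D : X * bool -> R) :
  is_pmf D -> smooth_xmarg sigma D ->
  \sum_(z : X * bool) D z ^+ 2 <= (sigma * #|X|%:R)^-1.
Proof.
move=> [D0 D1] smooth; set M := (sigma * #|X|%:R)^-1.
have DM z : D z <= M.
  case: z => x b; have := smooth x; have := D0 (x, false); have := D0 (x, true).
  by rewrite /M; case: b => /= *; lra.
apply: (@le_trans _ _ (\sum_(z : X * bool) D z * M)).
  by apply: ler_sum => z _; rewrite expr2 ler_wpM2l.
by rewrite -mulr_suml D1 mul1r.
Qed.

Lemma counts_perm {X : finType} (a b : seq (X * bool)) :
  perm_eq a b -> counts a = counts b.
Proof. by move/permP => ab; apply/ffunP => z; rewrite !ffunE ab. Qed.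

Section FTPLFibres.
Context {R : realType} {X : finType}.
Variables (OPT : {ffun X * bool -> nat} -> (X -> R)) (alpha : R)
  (hist : seq (X * bool)).

Definition ftpl_from (s : seq (X * bool)) : X -> R := ftpl_hyp OPT alpha (s ++ hist).

Lemma ftpl_from_perm a b : perm_eq a b -> ftpl_from a = ftpl_from b.
Proof.
move=> ab; rewrite /ftpl_from /ftpl_hyp.
by rewrite (@counts_perm _ (a ++ hist) (b ++ hist)) // perm_cat2r.
Qed.

Lemma ftpl_from_rcons z s :
  ftpl_hyp OPT alpha (s ++ rcons hist z) = ftpl_from (z :: s).
Proof.
rewrite /ftpl_from /ftpl_hyp (@counts_perm _ _ ((z :: s) ++ hist)) //.
by apply/permP => a; rewrite /= -cats1 !count_cat /=; lia.
Qed.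

Lemma Qdist_pushforward (n : R) :
  Qdist OPT n alpha hist = pushforward ftpl_from (halluc_pmf n).
Proof. by apply: funext => h; exact: esum_preimage. Qed.

Lemma Qdist_next_pushforward (n : R) (D : X * bool -> R) :
  0 < n -> (0 < #|X|)%N -> (forall z, 0 <= D z) ->
  (fun h => \sum_(z : X * bool) (D z)%:E * Qdist OPT n alpha (rcons hist z) h)%E
  = pushforward ftpl_from (fun t => halluc_pmf n t * likelihood_ratio n D t).
Proof.
move=> n_gt0 X_gt0 D0; apply: funext => h.
rewrite /pushforward -size_bias //; last by move=> a b /ftpl_from_perm ->.
apply: eq_bigr => z _; congr (_ * _)%E; rewrite /Qdist esum_preimage.
by apply: eq_esum => s _; rewrite ftpl_from_rcons.
Qed.
End FTPLFibres.

Theorem lemma4p5 (R : realType) (X : finType) (F : set (X -> R))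
  (OPT : {ffun (X * bool)%type -> nat} -> (X -> R)) (n alpha sigma : R)
  (hist : seq (X * bool)) (D : (X * bool)%type -> R) :
  (0 < #|X|)%N ->
  (forall f, F f -> forall x, 0 <= f x <= 1) ->
  is_ERM F OPT ->
  0 < n -> 0 <= alpha -> 0 < sigma ->
  is_pmf D -> smooth_xmarg sigma D ->
  (chi2 (fun h => \sum_(z : X * bool) (D z)%:E * Qdist OPT n alpha (rcons hist z) h)
        (Qdist OPT n alpha hist)
   <= (2 / (sigma * n))%:E)%E.
Proof.
move=> X_gt0 _ _ n_gt0 _ sigma_gt0 D_pmf smooth; have [D0 D1] := D_pmf.
rewrite Qdist_next_pushforward // Qdist_pushforward.
apply: le_trans (chi2_pushforward_le _ (likelihood_ratio_ge0 n_gt0 X_gt0 D0)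
  (halluc_pmf_ge0 n) (halluc_mass n_gt0 X_gt0)
  (likelihood_ratio_mass n_gt0 X_gt0 D0 D1)) _.
rewrite likelihood_ratio_variance // lee_fin.
have u_gt0 : 0 < @unif_weight R X by exact: unif_weight_gt0.
apply: le_trans (ler_wpM2l _ (smooth_collision_le D_pmf smooth)) _.
  by rewrite invr_ge0 mulr_ge0 // ltW.
have X_neq0 : #|X|%:R != 0 :> R by rewrite pnatr_eq0 -lt0n.
suff -> : (n * @unif_weight R X)^-1 * (sigma * #|X|%:R)^-1 = 2 / (sigma * n) by [].
by rewrite /unif_weight natrM; field; rewrite X_neq0 !gt_eqF.
Qed.
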